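(* Let $\Gamma$ be the graph with exactly two vertices $s$ and $t$, which are not adjacent, and let $G=G(C_\Gamma)$. If $a\in A_5(s)$ is an involution, then its centralizer $Z_G(a)$ is contained in $S_5(s)$.
   Context: For a graph $\Gamma$ with vertex set $S$, $G(C_\Gamma)$ is the group with generators $s_1,s_2,s_3,s_4$ for each $s\in S$ and exactly the following relations: every generator is an involution; for each $s\in S$, $(s_is_{i+1})^3=e$ for $i=1,2,3$ and $(s_is_j)^2=e$ for $|i-j|\ge2$; for all distinct $s,t\in S$, $(s_4t_4)^2=e$; for all distinct adjacent $s,t\in S$, $(s_1t_1)^2=(s_1t_3)^2=(s_3t_1)^2=(s_3t_3)^2=e$. Thus here $G$ is generated by $s_1,\dots,s_4,t_1,\dots,t_4$ with the relations among the $s_i$, among the $t_i$, and $(s_4t_4)^2=e$ only. $S_5(s)=\langle s_1,s_2,s_3,s_4\rangle\cong S_5$ and $A_5(s)$ is its index-$2$ subgroup ($\cong A_5$). $Z_G(a)=\{g\in G: ga=ag\}$. *)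

(* The group G = G(C_Gamma) for Gamma = two non-adjacent
   vertices s, t is given by its presentation: elements are words in the
   eight generators s_1..s_4, t_1..t_4 modulo the congruence generated by
   the defining relators (every generator is an involution, so the monoid
   quotient is a group, inverse = reversed word, product = concatenation). *)
From mathcomp Require Import all_boot.
Set Implicit Arguments. Unset Strict Implicit. Unset Printing Implicit Defensive.

(* A generator: (true, i) is s_{i+1}, (false, i) is t_{i+1}. *)
Definition letter := (bool * 'I_4)%type.
Definition word := seq letter.

Definition idx3 : 'I_4 := @Ordinal 4 3 erefl.

Inductive relator : word -> Prop :=
| rel_inv (x : letter) : relator [:: x; x]
| rel_braid (b : bool) (i j : 'I_4) :
    nat_of_ord j = (nat_of_ord i).+1 ->
    relator (flatten (nseq 3 [:: (b, i); (b, j)]))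
| rel_comm (b : bool) (i j : 'I_4) :
    ((i.+2 <= j) || (j.+2 <= i))%N ->
    relator [:: (b, i); (b, j); (b, i); (b, j)]
| rel_s4t4 : relator [:: (true, idx3); (false, idx3); (true, idx3); (false, idx3)].

Inductive weq : word -> word -> Prop :=
| weq_refl w : weq w w
| weq_sym u v : weq u v -> weq v u
| weq_trans u v w : weq u v -> weq v w -> weq u w
| weq_rel (u r v : word) : relator r -> weq (u ++ r ++ v) (u ++ v).

Definition s_word (w : word) : bool := all (fun x : letter => x.1) w.

Definition in_S5s (g : word) : Prop := exists w, s_word w /\ weq g w.

(* g lies in A_5(s): the index-2 (even-length) subgroup of S_5(s). *)
Definition in_A5s (g : word) : Prop :=
  exists w, s_word w /\ ~~ odd (size w) /\ weq g w.

Definition in_centralizer (a g : word) : Prop := weq (g ++ a) (a ++ g).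

Definition involution (a : word) : Prop := weq (a ++ a) [::] /\ ~ weq a [::].

(* Write A = S5(s), C = <s4>, D = <t4> and P = <S5(t), s4 S5(t) s4>. Since s4 commutes only with
   t4, P is the amalgam of S5(t) and its s4-conjugate over D, and G is the amalgam of A and
   P x| C over C. Reduced words therefore give normal forms for the cosets G/A; G acts on them
   (the relators act trivially), and every g is the representative word of g A times an
   element of A, so whatever fixes the base coset lies in A.
   If g centralises a, then a fixes g A. But a fixes no other coset: on a coset whose leading
   factor from A is h, the element a replaces h by the representative of a h C, and a h C = h C
   means h^-1 a h lies in C = {1, (3 4)}, which is impossible for an even a <> 1.
   Permutations are handled as lists of values; that the Coxeter relations present S5 is
   checked with a complete rewriting system. *)

From mathcomp Require Import all_boot zify.
From Stdlib Require Import Setoid Morphisms.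
Set Implicit Arguments. Unset Strict Implicit. Unset Printing Implicit Defensive.

#[local] Hint Resolve weq_refl : core.

#[export] Instance weq_equivalence : Equivalence weq.
Proof. split; [exact: weq_refl | exact: weq_sym | exact: weq_trans]. Qed.

Lemma weq_catl l u v : weq u v -> weq (l ++ u) (l ++ v).
Proof.
elim=> {u v} [w|u v _ IH|u v w _ IH1 _ IH2|u r v hr].
- by [].
- by symmetry.
- by rewrite IH1.
- by rewrite !catA -(catA (l ++ u)); apply: weq_rel.
Qed.

Lemma weq_catr l u v : weq u v -> weq (u ++ l) (v ++ l).
Proof.
elim=> {u v} [w|u v _ IH|u v w _ IH1 _ IH2|u r v hr].
- by [].
- by symmetry.
- by rewrite IH1.
- by rewrite -!catA; apply: weq_rel.
Qed.

#[export] Instance cat_weq : Proper (weq ==> weq ==> weq) (@cat letter).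
Proof. by move=> u u' hu v v' hv; apply: weq_trans (weq_catr _ hu) (weq_catl _ hv). Qed.

#[export] Instance cons_weq x : Proper (weq ==> weq) (cons x).
Proof. by move=> u v h; apply: (weq_catl [:: x]). Qed.

Lemma weq_cancel x w : weq (x :: x :: w) w.
Proof. exact: (@weq_rel [::] _ w (rel_inv x)). Qed.

Lemma weq_cancel_r x w : weq (w ++ [:: x; x]) w.
Proof. by have := @weq_rel w _ [::] (rel_inv x); rewrite !cats0. Qed.

Lemma weq_commute x y : relator [:: x; y; x; y] -> weq [:: y; x] [:: x; y].
Proof.
move=> hr; have := @weq_rel [:: y; x] _ [::] hr; rewrite !cats0 => <- /=.
by rewrite weq_cancel weq_cancel.
Qed.

Lemma weq_braid x y : relator [:: x; y; x; y; x; y] -> weq [:: x; y; x] [:: y; x; y].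
Proof.
move=> hr; have := @weq_rel [::] _ [:: y; x; y] hr => /= <-.
rewrite -[[:: x; y; x]]cats0 -(weq_cancel y [::]).
by rewrite -(weq_cancel x [:: y]) -(weq_cancel y [:: x; y]).
Qed.

(** * Permutations of {0,...,4} *)

(* A permutation is the list of its values; [mulp p q] applies [p] first, and [transp n]
   exchanges [n] and [n.+1], so [perm_of w] is the image in S5 of the generator word [w]. *)

Definition perm5 := seq nat.

Definition id5 : perm5 := iota 0 5.

Definition mulp (p q : perm5) : perm5 := [seq nth 0 q (nth 0 p k) | k <- iota 0 5].
Arguments mulp : simpl never.

Definition transp (n : nat) : perm5 :=
  [seq if k == n then n.+1 else if k == n.+1 then n else k | k <- iota 0 5].

Definition S5 : seq perm5 := permutations id5.

Definition perm_of (w : seq nat) : perm5 := foldr (fun n => mulp (transp n)) id5 w.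

Lemma S5_lt5 q k : q \in S5 -> k \in q -> k < 5.
Proof. by rewrite mem_permutations => /perm_mem-> ; rewrite mem_iota. Qed.

Lemma size_S5 q : q \in S5 -> size q = 5.
Proof. by rewrite mem_permutations => /perm_size->; rewrite size_iota. Qed.

Lemma nth_mulp p q k : k < 5 -> nth 0 (mulp p q) k = nth 0 q (nth 0 p k).
Proof. by move=> hk; rewrite (nth_map 0) ?size_iota // nth_iota. Qed.

Lemma mulpA p q r : p \in S5 -> mulp (mulp p q) r = mulp p (mulp q r).
Proof.
move=> hp; apply/eq_in_map => k; rewrite mem_iota add0n => /andP[_ hk].
rewrite nth_mulp // nth_mulp //; case: (ltnP k (size p)) => hks; last by rewrite nth_default.
exact/(S5_lt5 hp)/mem_nth.
Qed.

Lemma mul1p q : size q = 5 -> mulp id5 q = q.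
Proof.
move=> hq; rewrite -[RHS](mkseq_nth 0) hq; apply/eq_in_map => k.
by rewrite mem_iota add0n => /andP[_ hk]; rewrite nth_iota.
Qed.

Lemma mulp1 q : q \in S5 -> mulp q id5 = q.
Proof.
move=> qS; rewrite -[RHS](mkseq_nth 0) size_S5 //; apply/eq_in_map => k.
rewrite mem_iota add0n => /andP[_ hk]; rewrite nth_iota //.
by apply/(S5_lt5 qS)/mem_nth; rewrite size_S5.
Qed.

Lemma mul1p_S5 q : q \in S5 -> mulp id5 q = q.
Proof. by move=> /size_S5; exact: mul1p. Qed.

Lemma id5_S5 : id5 \in S5.
Proof. by vm_compute. Qed.

Lemma transp_S5 n : n < 4 -> transp n \in S5.
Proof. by case: n => [|[|[|[]]]]. Qed.

Lemma size_perm_of w : size (perm_of w) = 5.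
Proof. by case: w. Qed.

Fixpoint inversions (q : seq nat) : nat :=
  if q is x :: r then count (fun y => y < x) r + inversions r else 0.

Definition odd_perm5 (q : perm5) : bool := odd (inversions q).

(** * The Coxeter presentation of S5 *)

Definition mkword (b : bool) (w : seq nat) : word := [seq (b, inord n) | n <- w].
Arguments mkword : simpl never.

Lemma mkword_cons b n w : mkword b (n :: w) = (b, inord n) :: mkword b w.
Proof. by []. Qed.

Lemma mkword_cat b u v : mkword b (u ++ v) = mkword b u ++ mkword b v.
Proof. exact: map_cat. Qed.

Definition indices (w : word) : seq nat := [seq val l.2 | l <- w].

Definition valid (w : seq nat) := all (fun n => n < 4) w.

Lemma valid_cat u v : valid (u ++ v) = valid u && valid v.
Proof. exact: all_cat. Qed.

Lemma valid_indices w : valid (indices w).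
Proof. by apply/allP => _ /mapP[l _ ->]; exact: ltn_ord. Qed.

Lemma s_word_mkword w : s_word w -> w = mkword true (indices w).
Proof.
elim: w => [|[b i] w IH] //= /andP[/= -> /IH {1}->].
by rewrite /indices /= mkword_cons inord_val.
Qed.

Lemma mkword_commute b m n r : m < 4 -> n < 4 -> (m.+2 <= n) || (n.+2 <= m) ->
  weq (mkword b [:: n, m & r]) (mkword b [:: m, n & r]).
Proof.
move=> hm hn hmn; apply: (@weq_catr (mkword b r) (mkword b [:: n; m]) (mkword b [:: m; n])).
by apply/weq_commute/rel_comm; rewrite !inordK.
Qed.

Lemma mkword_braid b m r : m.+1 < 4 ->
  weq (mkword b [:: m, m.+1, m & r]) (mkword b [:: m.+1, m, m.+1 & r]).
Proof.
move=> hm; apply: (@weq_catr (mkword b r) (mkword b [:: m; m.+1; m]) (mkword b [:: m.+1; m; m.+1])).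
by apply/weq_braid/rel_braid; rewrite !inordK // ltnW.
Qed.

Lemma mkword_commute_word b x v r : x < 4 -> all (fun z => z.+2 <= x) v ->
  weq (mkword b (v ++ x :: r)) (mkword b (x :: v ++ r)).
Proof.
move=> hx; elim: v => [_|z v IH /andP[hz hv]] //=.
rewrite -(@mkword_commute b x z (v ++ r)); try lia.
exact: (cons_weq (b, inord z) (IH hv)).
Qed.

(* Leftmost rewriting that deletes [i i] and applies [j i -> i j] for [j >= i + 2] and
   [x (x-1) v x -> (x-1) x (x-1) v] for a word [v] of letters below [x - 1]. Each rule follows
   from the Coxeter relations, and the irreducible words are normal forms for S5 ([nf_cons]). *)

Definition coxeter_head_step (x : nat) (r : seq nat) : option (seq nat) :=
  if r is y :: r' then
    if x == y then Some r'
    else if y.+2 <= x then Some (y :: x :: r')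
    else if (0 < x) && (y == x.-1) then
      let s := find (fun z => x.-1 <= z) r' in
      if nth 0 r' s == x then Some (x.-1 :: x :: x.-1 :: take s r' ++ drop s.+1 r')
      else None
    else None
  else None.

Fixpoint coxeter_step (w : seq nat) : option (seq nat) :=
  if w is x :: r then
    if coxeter_head_step x r is Some w' then Some w' else omap (cons x) (coxeter_step r)
  else None.

Fixpoint coxeter_reduce (fuel : nat) (w : seq nat) : seq nat :=
  if fuel is f.+1 then
    if coxeter_step w is Some w' then coxeter_reduce f w' else w
  else w.

Definition first_descent (q : perm5) : nat := find (fun i => nth 0 q i.+1 < nth 0 q i) (iota 0 4).

Fixpoint descent_word (fuel : nat) (q : perm5) : seq nat :=
  if fuel is f.+1 then
    let i := first_descent q in
    if i < 4 then i :: descent_word f (mulp (transp i) q) else [::]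
  else [::].

(* The fuel is ample; only [nf_spec] and [nf_cons] depend on it. *)

Definition nf (q : perm5) : seq nat := coxeter_reduce 50 (descent_word 10 q).
Arguments nf : simpl never.

Lemma all_take_find (T : Type) (p : pred T) s : all (predC p) (take (find p s) s).
Proof. by elim: s => //= x s IH; case: ifP => //= ->. Qed.

Lemma coxeter_head_step_sound b x r w' : valid (x :: r) -> coxeter_head_step x r = Some w' ->
  valid w' /\ weq (mkword b (x :: r)) (mkword b w').
Proof.
case: r => [|y r'] //= /and3P[hx hy hr'].
case: eqP => [<- [<-]|_]; first by split=> //; exact: (weq_cancel (b, inord x) (mkword b r')).
case: ifP => [hyx [<-]|_]; first by rewrite /= hx hy hr' mkword_commute //; lia.
case: ifP => // /andP[x_gt0 /eqP ->] {y hy}.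
set s := find _ r'; case: eqP => // hs [<-].
have s_lt : s < size r'.
  by rewrite ltnNge; apply: contraTN isT => /(nth_default 0); rewrite hs; lia.
have def_r' : r' = take s r' ++ x :: drop s.+1 r'.
  by rewrite -[in LHS](cat_take_drop s r') (drop_nth 0 s_lt) hs.
have take_small : all (fun z => z.+2 <= x) (take s r').
  by apply: sub_all (all_take_find _ _) => z /=; lia.
move: hr'; rewrite /valid {1}def_r' all_cat /= => /and3P[h1 _ h2].
split; first by rewrite /= all_cat h1 h2 hx andbT; lia.
have := mkword_braid b (take s r' ++ drop s.+1 r') (m := x.-1); rewrite prednK // => ->; last lia.
by rewrite {1}def_r' !mkword_cons mkword_commute_word.
Qed.

Lemma coxeter_step_sound b w w' : valid w -> coxeter_step w = Some w' ->
  valid w' /\ weq (mkword b w) (mkword b w').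
Proof.
elim: w w' => [|x r IH] w' //= hw.
case E: coxeter_head_step => [w''|]; first by move=> [<-]; exact: coxeter_head_step_sound E.
case/andP: hw => hx hr; case: coxeter_step (IH^~ hr) => // w'' /(_ _ erefl)[h1 h2] [<-].
by split; [exact/andP | rewrite !mkword_cons h2].
Qed.

Lemma coxeter_reduce_sound b fuel w : valid w ->
  valid (coxeter_reduce fuel w) /\ weq (mkword b w) (mkword b (coxeter_reduce fuel w)).
Proof.
elim: fuel w => [|f IH] w hw //=.
case E: coxeter_step => [w'|] //.
have [hw' e1] := coxeter_step_sound b hw E; have [h e2] := IH _ hw'.
by rewrite e1.
Qed.

Lemma nf_spec q : q \in S5 -> valid (nf q) /\ perm_of (nf q) = q.
Proof.
have : all (fun q => valid (nf q) && (perm_of (nf q) == q)) S5 by vm_compute.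
by move=> /allP h /h /andP[-> /eqP].
Qed.

Lemma nf_cons n q : n < 4 -> q \in S5 ->
  mulp (transp n) q \in S5 /\ coxeter_reduce 50 (n :: nf q) = nf (mulp (transp n) q).
Proof.
have : all (fun n => all (fun q => (mulp (transp n) q \in S5) &&
  (coxeter_reduce 50 (n :: nf q) == nf (mulp (transp n) q))) S5) (iota 0 4) by vm_compute.
move=> /allP h hn hq; have hn' : n \in iota 0 4 by rewrite mem_iota.
by have /allP/(_ q hq)/andP[-> /eqP] := h n hn'.
Qed.

Lemma perm_of_S5 w : valid w -> perm_of w \in S5.
Proof.
elim: w => [_|n w IH /andP[hn /IH hw]]; first exact: id5_S5.
by case: (nf_cons hn hw).
Qed.

Lemma weq_mkword_nf b w : valid w -> weq (mkword b w) (mkword b (nf (perm_of w))).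
Proof.
elim: w => [|n w IH] /= hw; first by rewrite (_ : nf id5 = [::]) //; vm_compute.
case/andP: hw => hn hw; have [_ <-] := nf_cons hn (perm_of_S5 hw).
have [hs _] := nf_spec (perm_of_S5 hw).
rewrite mkword_cons (IH hw) -mkword_cons.
by case: (@coxeter_reduce_sound b 50 (n :: nf (perm_of w))) => //; apply/andP.
Qed.

Theorem coxeter_faithful b u v : valid u -> valid v -> perm_of u = perm_of v ->
  weq (mkword b u) (mkword b v).
Proof. by move=> hu hv e; rewrite weq_mkword_nf // e -weq_mkword_nf. Qed.

Lemma perm_of_cat u v : valid u -> perm_of (u ++ v) = mulp (perm_of u) (perm_of v).
Proof.
elim: u => [_|n u IH /andP[hn hu]] /=; first by rewrite mul1p // size_perm_of.
by rewrite IH // mulpA // transp_S5.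
Qed.

Lemma mulp_S5 x y : x \in S5 -> y \in S5 -> mulp x y \in S5.
Proof.
move=> /nf_spec[hx <-] /nf_spec[hy <-].
by rewrite -perm_of_cat // perm_of_S5 // valid_cat hx hy.
Qed.

Lemma odd_perm_of w : valid w -> odd_perm5 (perm_of w) = odd (size w).
Proof.
have : all (fun n => all (fun q => odd_perm5 (mulp (transp n) q) == ~~ odd_perm5 q) S5) (iota 0 4).
  by vm_compute.
move=> /allP h; elim: w => [|n w IH] /=; first by vm_compute.
case/andP=> hn hw; have hn' : n \in iota 0 4 by rewrite mem_iota.
by have /allP/(_ _ (perm_of_S5 hw))/eqP-> := h n hn'; rewrite IH.
Qed.

(* Locked: unfolding the fuel-driven [nf] during unification makes setoid rewriting diverge. *)

Fact perm_word_key : unit. Proof. by []. Qed.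

Definition perm_word := locked_with perm_word_key (fun (b : bool) (q : perm5) => mkword b (nf q)).

Lemma perm_wordE b q : perm_word b q = mkword b (nf q).
Proof. by rewrite /perm_word locked_withE. Qed.

Lemma perm_word_mul b x y : x \in S5 -> y \in S5 ->
  weq (perm_word b x ++ perm_word b y) (perm_word b (mulp x y)).
Proof.
move=> xS yS; have [hx ex] := nf_spec xS; have [hy ey] := nf_spec yS.
have [hxy exy] := nf_spec (mulp_S5 xS yS).
rewrite !perm_wordE -mkword_cat; apply: coxeter_faithful; rewrite ?valid_cat ?hx ?hy //.
by rewrite perm_of_cat // ex ey exy.
Qed.

Lemma perm_word_id b : perm_word b id5 = [::].
Proof. by rewrite perm_wordE (_ : nf id5 = [::]) //; vm_compute. Qed.

Lemma perm_word_transp b (i : 'I_4) : perm_word b (transp i) = [:: (b, i)].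
Proof.
rewrite perm_wordE (_ : nf (transp i) = [:: val i]).
  by rewrite mkword_cons /= inord_val.
by case: i => [[|[|[|[]]]] ?] //; vm_compute.
Qed.

(* Right multiplication by (3 4) exchanges the values 3 and 4, so each coset z C has exactly
   one representative in which 3 precedes 4. *)

Definition tr34 : perm5 := transp 3.

Definition in_C (c : perm5) : bool := (c == id5) || (c == tr34).

Definition transversal (y : perm5) : bool := (y \in S5) && (index 3 y < index 4 y).

Definition nontrivial_rep (y : perm5) : bool := transversal y && (y != id5).

Definition splitC (z : perm5) : perm5 * perm5 :=
  if index 4 z < index 3 z then (mulp z tr34, tr34) else (z, id5).
Arguments splitC : simpl never.

Lemma in_C_S5 c : in_C c -> c \in S5.
Proof. by case/orP=> /eqP->; [exact: id5_S5 | exact: transp_S5]. Qed.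

Lemma in_C_cases c : in_C c -> c = id5 \/ c = tr34.
Proof. by case/orP=> /eqP->; [left | right]. Qed.

Lemma in_C_mul c1 c2 : in_C c1 -> in_C c2 -> in_C (mulp c1 c2).
Proof. by move=> /in_C_cases[]-> /in_C_cases[]->. Qed.

Lemma tr34_invol : mulp tr34 tr34 = id5.
Proof. by []. Qed.

Lemma transversal_S5 y : transversal y -> y \in S5.
Proof. by case/andP. Qed.

Lemma nontrivial_transversal y : nontrivial_rep y -> transversal y.
Proof. by case/andP. Qed.

Lemma splitC_spec z : z \in S5 ->
  [/\ transversal (splitC z).1, in_C (splitC z).2 & mulp (splitC z).1 (splitC z).2 = z].
Proof.
have : all (fun z => transversal (splitC z).1 && in_C (splitC z).2 &&
  (mulp (splitC z).1 (splitC z).2 == z)) S5 by vm_compute.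
by move=> /allP h /h /andP[/andP[-> ->] /eqP].
Qed.

Lemma splitC_mulC z c : z \in S5 -> in_C c ->
  splitC (mulp z c) = ((splitC z).1, mulp (splitC z).2 c).
Proof.
have : all (fun z => all (fun c => splitC (mulp z c) == ((splitC z).1, mulp (splitC z).2 c))
  [:: id5; tr34]) S5 by vm_compute.
by move=> /allP h /h /allP hz hc; apply/eqP/hz; case/in_C_cases: hc => ->.
Qed.

Lemma splitC_mul a b : a \in S5 -> b \in S5 ->
  let z := splitC (mulp a (splitC b).1) in splitC (mulp a b) = (z.1, mulp z.2 (splitC b).2).
Proof.
move=> aS bS /=; have [/andP[yS _] cC eb] := splitC_spec bS.
by rewrite -{1}eb -mulpA // splitC_mulC // mulp_S5.
Qed.

Lemma splitC_transversal y : transversal y -> splitC y = (y, id5).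
Proof. by case/andP=> _ h; rewrite /splitC ltnNge ltnW. Qed.

Lemma splitC_C c : in_C c -> splitC c = (id5, c).
Proof. by case/in_C_cases=> ->. Qed.

Lemma splitC_nontrivial c y : in_C c -> nontrivial_rep y -> (splitC (mulp c y)).1 != id5.
Proof.
have : all (fun c => all (fun y => ~~ nontrivial_rep y || ((splitC (mulp c y)).1 != id5)) S5)
  [:: id5; tr34] by vm_compute.
move=> /allP h hc /andP[/andP[yS yT] y1].
have hc' : c \in [:: id5; tr34] by case/in_C_cases: hc => ->.
have /allP/(_ y yS) := h c hc'.
by rewrite /nontrivial_rep /transversal yS yT y1.
Qed.

(* [a h C = h C] means [h^-1 a h] lies in [C = {1, (3 4)}], which forces [a = 1] or [a] odd. *)

Lemma transversal_not_fixed a h : a \in S5 -> a != id5 -> ~~ odd_perm5 a -> transversal h ->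
  (splitC (mulp a h)).1 != h.
Proof.
have : all (fun a => (a == id5) || odd_perm5 a ||
  all (fun h => ~~ transversal h || ((splitC (mulp a h)).1 != h)) S5) S5 by vm_compute.
move=> /allP check aS a1 aeven hT; have /orP[/orP[]|/allP] := check a aS.
- by rewrite (negbTE a1).
- by rewrite (negbTE aeven).
by move/(_ _ (transversal_S5 hT)); rewrite hT.
Qed.

(** * Normal forms in P = <S5(t), s4 S5(t) s4> *)

(* Both s4 and t4 map to (3 4), so [in_C] also describes D and [splitC] the cosets of D.
   A syllable (false, y) stands for y in S5(t) and (true, y) for s4 y s4; a [pnf] (ss, d) stands
   for the alternating reduced word ss followed by d in D. [actT b] is left multiplication by
   b in S5(t), [conjC c] is conjugation by c in <s4>, and [pushD e ss d] normalises e ss d. *)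

Definition syl := (bool * perm5)%type.

Definition pnf := (seq syl * perm5)%type.

Definition pnf1 : pnf := ([::], id5).

Fixpoint pushD (e : perm5) (ss : seq syl) (d : perm5) : pnf :=
  if ss is u :: r then
    let z := splitC (mulp e u.2) in ((u.1, z.1) :: (pushD z.2 r d).1, (pushD z.2 r d).2)
  else ([::], mulp e d).

Definition lead_T (ss : seq syl) : perm5 := if ss is (false, y) :: _ then y else id5.

Definition behead_T (ss : seq syl) : seq syl := if ss is (false, _) :: r then r else ss.

Definition has_lead_T (ss : seq syl) : bool := if ss is (false, _) :: _ then true else false.

Definition consT (y : perm5) (p : pnf) : pnf := if y == id5 then p else ((false, y) :: p.1, p.2).

Definition actT (b : perm5) (p : pnf) : pnf :=
  let z := splitC (mulp b (lead_T p.1)) in consT z.1 (pushD z.2 (behead_T p.1) p.2).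

Definition swap_tag (u : syl) : syl := (~~ u.1, u.2).

Definition conjC (c : perm5) (p : pnf) : pnf := if c == id5 then p else (map swap_tag p.1, p.2).

Definition alternating (ss : seq syl) : bool := sorted (fun u v => u.1 != v.1) ss.

Definition reduced (ss : seq syl) : bool := alternating ss && all (fun u => nontrivial_rep u.2) ss.

Definition pnf_wf (p : pnf) : bool := reduced p.1 && in_C p.2.

Lemma pushD_tags e ss d : map fst (pushD e ss d).1 = map fst ss.
Proof. by elim: ss e => [|u r IH] e //=; rewrite IH. Qed.

Lemma alternating_tags ss ss' : map fst ss = map fst ss' -> alternating ss = alternating ss'.
Proof.
case: ss ss' => [|u r] [|u' r'] //= [+ h].
elim: r r' u u' h => [|v r IH] [|v' r'] u u' //= [hv h] hu.
by rewrite hu hv (IH r' v v').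
Qed.

Lemma pushD_wf e ss d : in_C e -> reduced ss -> in_C d ->
  reduced (pushD e ss d).1 /\ in_C (pushD e ss d).2.
Proof.
rewrite /reduced (alternating_tags (pushD_tags e ss d)) => + /andP[-> +] hd /=.
elim: ss e => [|u r IH] e he /=; first by move=> _; split=> //; exact: in_C_mul.
case/andP=> hu hr; have uS := transversal_S5 (nontrivial_transversal hu).
have [h1 h2 _] := splitC_spec (mulp_S5 (in_C_S5 he) uS).
by have [-> ->] := IH _ h2 hr; rewrite /nontrivial_rep h1 splitC_nontrivial.
Qed.

Lemma has_lead_T_pushD e ss d : has_lead_T (pushD e ss d).1 = has_lead_T ss.
Proof. by case: ss => [|[[] y] r]. Qed.

Lemma reduced_behead_T ss : reduced ss -> reduced (behead_T ss) /\ ~~ has_lead_T (behead_T ss).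
Proof.
case: ss => [|[[] y] r] //; rewrite /reduced /alternating /= => /andP[hs /andP[_ hr]].
rewrite hr (path_sorted hs); split=> //.
by case: r hs {hr} => [|[[] y'] r'] //= /andP[].
Qed.

Lemma lead_T_transversal ss : reduced ss -> transversal (lead_T ss).
Proof.
case: ss => [|[[] y] r] // /andP[_ /andP[hy _]].
exact: nontrivial_transversal.
Qed.

Lemma consT_wf y p : transversal y -> pnf_wf p -> ~~ has_lead_T p.1 -> pnf_wf (consT y p).
Proof.
rewrite /consT; case: eqP => [_ //|/eqP y1] yT /andP[/andP[hs ha] hc] hh.
rewrite /pnf_wf /reduced /alternating /= hc ha /nontrivial_rep yT y1 !andbT.
by case: p.1 hs hh => [|[[] y'] r].
Qed.

Lemma actT_wf b p : b \in S5 -> pnf_wf p -> pnf_wf (actT b p).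
Proof.
case: p => ss d bS /andP[/= hss hd]; rewrite /actT /=.
have [htl hnl] := reduced_behead_T hss.
have [h1 h2 _] := splitC_spec (mulp_S5 bS (transversal_S5 (lead_T_transversal hss))).
have [hw1 hw2] := pushD_wf h2 htl hd.
by apply: consT_wf; rewrite ?/pnf_wf ?hw1 ?hw2 ?has_lead_T_pushD.
Qed.

Lemma pushD_comp c1 c2 ss d :
  in_C c1 -> in_C c2 -> all (fun u => nontrivial_rep u.2) ss -> in_C d ->
  pushD c1 (pushD c2 ss d).1 (pushD c2 ss d).2 = pushD (mulp c1 c2) ss d.
Proof.
elim: ss c1 c2 => [|u r IH] c1 c2 h1 h2 /=; first by move=> _ hd; rewrite mulpA // in_C_S5.
case/andP=> hu hr hd; have uS := transversal_S5 (nontrivial_transversal hu).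
have zS := mulp_S5 (in_C_S5 h2) uS; have [hy he _] := splitC_spec zS.
rewrite mulpA ?in_C_S5 // (splitC_mul (in_C_S5 h1) zS) IH //.
by have [] := splitC_spec (mulp_S5 (in_C_S5 h1) (transversal_S5 hy)).
Qed.

Lemma pushD_id ss d : all (fun u => nontrivial_rep u.2) ss -> in_C d -> pushD id5 ss d = (ss, d).
Proof.
elim: ss => [|u r IH] /=; first by move=> _ /in_C_S5/mul1p_S5->.
case/andP=> hu hr hd; have uT := nontrivial_transversal hu.
by rewrite mul1p_S5 ?transversal_S5 // splitC_transversal //= IH //; case: u hu {uT}.
Qed.

Lemma consT_snd y p : (consT y p).2 = p.2.
Proof. by rewrite /consT; case: ifP. Qed.

Lemma consT_lead y p : ~~ has_lead_T p.1 ->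
  lead_T (consT y p).1 = y /\ behead_T (consT y p).1 = p.1.
Proof. by rewrite /consT; case: eqP => [-> |_] //=; case: p.1 => [|[[] ?] ?]. Qed.

Lemma actT_comp a b p : a \in S5 -> b \in S5 -> pnf_wf p -> actT a (actT b p) = actT (mulp a b) p.
Proof.
case: p => ss d aS bS /andP[/= hss hd]; rewrite /actT /=.
have [htl hnl] := reduced_behead_T hss.
have zS := mulp_S5 bS (transversal_S5 (lead_T_transversal hss)).
have [h1 h2 _] := splitC_spec zS.
have hnl' : ~~ has_lead_T (pushD (splitC (mulp b (lead_T ss))).2 (behead_T ss) d).1.
  by rewrite has_lead_T_pushD.
have [-> ->] := consT_lead (splitC (mulp b (lead_T ss))).1 hnl'.
rewrite mulpA // (splitC_mul aS zS) consT_snd.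
have [_ h2' _] := splitC_spec (mulp_S5 aS (transversal_S5 h1)).
by rewrite pushD_comp //; case/andP: htl.
Qed.

Lemma actT_id p : pnf_wf p -> actT id5 p = p.
Proof.
case: p => ss d /andP[/= hss hd]; rewrite /actT /=.
have hl := lead_T_transversal hss; have [htl _] := reduced_behead_T hss.
rewrite mul1p_S5 ?transversal_S5 // splitC_transversal //= pushD_id //; last by case/andP: htl.
by rewrite /consT; case: ss hss {hl htl} => [|[[] y] r] //= /andP[_ /andP[/andP[_ /negbTE ->] _]].
Qed.

Lemma conjC_id p : conjC id5 p = p.
Proof. by rewrite /conjC eqxx. Qed.

Lemma conjC_comp c1 c2 p : in_C c1 -> in_C c2 -> conjC c1 (conjC c2 p) = conjC (mulp c1 c2) p.
Proof.
move=> /in_C_cases[]-> /in_C_cases[]->; rewrite ?conjC_id //.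
case: p => ss d; rewrite /conjC /= -map_comp map_id_in // => -[t y] _.
by rewrite /swap_tag /= negbK.
Qed.

Lemma conjC_eq_pnf1 c p : (conjC c p == pnf1) = (p == pnf1).
Proof. by rewrite /conjC; case: ifP => // _; case: p => [[|u r] d]. Qed.

Lemma alternating_map_swap_tag ss : alternating (map swap_tag ss) = alternating ss.
Proof.
case: ss => [|u r] //; rewrite /alternating /=.
by elim: r u => [|v r IH] u //=; rewrite IH /swap_tag /= (inj_eq negb_inj).
Qed.

Lemma conjC_wf c p : pnf_wf p -> pnf_wf (conjC c p).
Proof.
rewrite /conjC; case: ifP => // _; case: p => ss d /andP[/andP[hs ha] hd].
by rewrite /pnf_wf /reduced /= alternating_map_swap_tag hs hd all_map andbT.
Qed.

(** * Normal forms of the cosets of S5(s) *)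

(* The coset (p0, [:: (a1, p1); ...]) stands for p0 a1 p1 a2 p2 ... S5(s), with each a_i a
   nontrivial representative of S5(s)/C and each p_i <> 1. [headA], [headP] and [restA] read off
   the leading pair, which is (1, p0) when p0 <> 1 and (a1, p1) otherwise; [actA a] is left
   multiplication by a in S5(s), and [pushC c] carries c in C rightwards through the tail. *)

Definition coset := (pnf * seq (perm5 * pnf))%type.

Definition base_coset : coset := (pnf1, [::]).

Fixpoint pushC (c : perm5) (tl : seq (perm5 * pnf)) : seq (perm5 * pnf) :=
  if tl is t :: r then
    let z := splitC (mulp c t.1) in (z.1, conjC z.2 t.2) :: pushC z.2 r
  else [::].

Lemma pushC_cons c t r :
  let z := splitC (mulp c t.1) in pushC c (t :: r) = (z.1, conjC z.2 t.2) :: pushC z.2 r.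
Proof. by []. Qed.

Definition consA (y c : perm5) (p : pnf) (tl : seq (perm5 * pnf)) : coset :=
  if y == id5 then (conjC c p, pushC c tl) else (pnf1, (y, conjC c p) :: pushC c tl).

Definition headA (x : coset) : perm5 :=
  if x.1 != pnf1 then id5 else if x.2 is t :: _ then t.1 else id5.

Definition headP (x : coset) : pnf :=
  if x.1 != pnf1 then x.1 else if x.2 is t :: _ then t.2 else pnf1.

Definition restA (x : coset) : seq (perm5 * pnf) := if x.1 != pnf1 then x.2 else behead x.2.

Definition actA (a : perm5) (x : coset) : coset :=
  if x == base_coset then x
  else let z := splitC (mulp a (headA x)) in consA z.1 z.2 (headP x) (restA x).

Definition tail_wf (tl : seq (perm5 * pnf)) : bool :=
  all (fun t => nontrivial_rep t.1 && pnf_wf t.2 && (t.2 != pnf1)) tl.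

Definition coset_wf (x : coset) : bool := pnf_wf x.1 && tail_wf x.2.

Lemma pushC_wf c tl : in_C c -> tail_wf tl -> tail_wf (pushC c tl).
Proof.
elim: tl c => [|t r IH] c hc //= /andP[/andP[/andP[ht hp] hp1] hr].
have [h1 h2 _] := splitC_spec (mulp_S5 (in_C_S5 hc) (transversal_S5 (nontrivial_transversal ht))).
by rewrite IH // conjC_wf // conjC_eq_pnf1 hp1 /nontrivial_rep h1 splitC_nontrivial.
Qed.

Lemma pushC_comp c1 c2 tl : in_C c1 -> in_C c2 -> tail_wf tl ->
  pushC c1 (pushC c2 tl) = pushC (mulp c1 c2) tl.
Proof.
elim: tl c1 c2 => [|t r IH] c1 c2 h1 h2 //= /andP[/andP[/andP[ht _] _] hr].
have zS := mulp_S5 (in_C_S5 h2) (transversal_S5 (nontrivial_transversal ht)).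
have [hy he _] := splitC_spec zS.
rewrite mulpA ?in_C_S5 // (splitC_mul (in_C_S5 h1) zS) /=.
have [_ hc _] := splitC_spec (mulp_S5 (in_C_S5 h1) (transversal_S5 hy)).
by rewrite conjC_comp // IH.
Qed.

Lemma pushC_id tl : tail_wf tl -> pushC id5 tl = tl.
Proof.
elim: tl => [|t r IH] //= /andP[/andP[/andP[ht _] _] hr].
have tT := nontrivial_transversal ht.
by rewrite mul1p_S5 ?transversal_S5 // splitC_transversal //= conjC_id IH //; case: t {ht tT}.
Qed.

Lemma headA_spec x : coset_wf x -> x != base_coset ->
  [/\ transversal (headA x), pnf_wf (headP x), headP x != pnf1 & tail_wf (restA x)].
Proof.
case: x => [p tl] /andP[/= hp ht] hx; rewrite /headA /headP /restA /=.
case: (p =P pnf1) hx => [-> |/eqP hne _]; last by rewrite hne.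
case: tl ht => [|t r]; first by rewrite eqxx.
by case/andP=> /andP[/andP[/nontrivial_transversal -> ->] ->] hr _; split.
Qed.

Lemma consA_spec y c p tl : transversal y -> in_C c -> pnf_wf p -> p != pnf1 -> tail_wf tl ->
  let x := consA y c p tl in
  [/\ coset_wf x, x != base_coset, headA x = y, headP x = conjC c p & restA x = pushC c tl].
Proof.
move=> yT hc hp hp1 htl /=.
have hsw : conjC c p != pnf1 by rewrite conjC_eq_pnf1.
rewrite /consA /coset_wf /headA /headP /restA; case: eqP => [->|/eqP y1] /=.
  by rewrite (negbTE hsw) conjC_wf // pushC_wf // -pair_eqE /= negb_and hsw.
by rewrite pushC_wf // conjC_wf // hsw /nontrivial_rep yT y1.
Qed.

Lemma actA_nonbase a x : x != base_coset ->
  actA a x = consA (splitC (mulp a (headA x))).1 (splitC (mulp a (headA x))).2 (headP x) (restA x).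
Proof. by rewrite /actA => /negbTE->. Qed.

Lemma actA_wf a x : a \in S5 -> coset_wf x -> coset_wf (actA a x).
Proof.
move=> aS hx; case: (x =P base_coset) => [-> //|/eqP hb]; rewrite actA_nonbase //.
have [h1 h2 h3 h4] := headA_spec hx hb.
have [hy hc _] := splitC_spec (mulp_S5 aS (transversal_S5 h1)).
by case: (consA_spec hy hc h2 h3 h4).
Qed.

Lemma actA_comp a b x : a \in S5 -> b \in S5 -> coset_wf x -> actA a (actA b x) = actA (mulp a b) x.
Proof.
move=> aS bS hx; case: (x =P base_coset) => [-> //|/eqP hb].
have [h1 h2 h3 h4] := headA_spec hx hb.
have zS := mulp_S5 bS (transversal_S5 h1); have [hy hc _] := splitC_spec zS.
rewrite (actA_nonbase b hb) (actA_nonbase (mulp a b) hb).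
case: (consA_spec hy hc h2 h3 h4) => _ hb'; rewrite (actA_nonbase a hb') => -> -> ->.
rewrite mulpA // (splitC_mul aS zS).
have [_ hc' _] := splitC_spec (mulp_S5 aS (transversal_S5 hy)).
by rewrite /consA conjC_comp // pushC_comp.
Qed.

Lemma actA_id x : coset_wf x -> actA id5 x = x.
Proof.
move=> hx; case: (x =P base_coset) => [-> //|/eqP hb].
have [h1 h2 h3 h4] := headA_spec hx hb.
rewrite actA_nonbase // mul1p_S5 ?transversal_S5 // splitC_transversal //=.
rewrite /consA conjC_id pushC_id //.
move: hx hb h1 h2 h3 h4; case: x => [p tl] /andP[/= hp ht] hb; rewrite /headA /headP /restA /=.
case: (p =P pnf1) hb => [-> |/eqP hne _]; last by rewrite hne eqxx.
case: tl ht => [|t r]; first by rewrite eqxx.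
by case/andP=> /andP[/andP[/andP[_ /negbTE ->] _] _] _ _; case: t.
Qed.

(** * The action of G on the coset normal forms *)

Definition act_letter (l : letter) (x : coset) : coset :=
  if l.1 then actA (transp l.2) x else (actT (transp l.2) x.1, x.2).

Definition act (w : word) (x : coset) : coset := foldr act_letter x w.

Lemma act_cat u v x : act (u ++ v) x = act u (act v x).
Proof. exact: foldr_cat. Qed.

Lemma act_wf w x : coset_wf x -> coset_wf (act w x).
Proof.
elim: w => [|[[] i] w IH] //= /IH hx; first exact: actA_wf (transp_S5 (ltn_ord i)) hx.
by case/andP: hx => h1 h2; rewrite /coset_wf /= h2 actT_wf ?transp_S5.
Qed.

Lemma act_s_word w x : s_word w -> coset_wf x -> act w x = actA (perm_of (indices w)) x.
Proof.
elim: w => [|[b i] w IH] /=; first by move=> _ hx; rewrite actA_id.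
case/andP=> /= -> hw hx; rewrite IH // /act_letter /= actA_comp ?transp_S5 //.
exact/perm_of_S5/valid_indices.
Qed.

Lemma act_t_word w x : all (fun l : letter => ~~ l.1) w -> coset_wf x ->
  act w x = (actT (perm_of (indices w)) x.1, x.2).
Proof.
case: x => p tl; elim: w => [|[b i] w IH] /= hw /andP[/= hp ht].
  by rewrite actT_id.
case/andP: hw => /= /negbTE-> hw; rewrite IH //=; last exact/andP.
by rewrite /act_letter /= actT_comp ?transp_S5 //; exact/perm_of_S5/valid_indices.
Qed.

Lemma pushD_map_swap_tag e ss d :
  pushD e (map swap_tag ss) d = (map swap_tag (pushD e ss d).1, (pushD e ss d).2).
Proof. by elim: ss e => [|u r IH] e //=; rewrite IH. Qed.

Lemma actT_tr34 p : pnf_wf p -> actT tr34 p = pushD tr34 p.1 p.2.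
Proof.
case: p => [[|[[] y] r] d] /andP[/= hss hd]; rewrite /actT /=; last first.
  have hy : nontrivial_rep y by case/andP: hss => _ /andP[].
  by rewrite /consT (negbTE (splitC_nontrivial _ hy)).
all: by rewrite mulp1 ?transp_S5 // splitC_C.
Qed.

Lemma actA_tr34 x : coset_wf x -> actA tr34 x = (conjC tr34 x.1, pushC tr34 x.2).
Proof.
case: x => p tl /andP[/= hp ht]; rewrite /actA /headA /headP /restA /=.
case: (p =P pnf1) => [-> |/eqP hne]; last by rewrite -pair_eqE /= (negbTE hne) mulp1 ?splitC_C.
case: tl ht => [|t r] //= /andP[/andP[/andP[ht _] _] _].
by rewrite /consA (negbTE (splitC_nontrivial _ ht)).
Qed.

Definition act_t4 (x : coset) : coset := (actT tr34 x.1, x.2).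

Lemma act_t4_wf x : coset_wf x -> coset_wf (act_t4 x).
Proof. by case/andP=> h1 h2; rewrite /coset_wf /= h2 actT_wf. Qed.

Lemma actA_tr34_act_t4 x : coset_wf x -> actA tr34 (act_t4 x) = act_t4 (actA tr34 x).
Proof.
move=> hx; rewrite (actA_tr34 (act_t4_wf hx)) (actA_tr34 hx) /act_t4 /=.
case/andP: hx => hp _; rewrite (actT_tr34 hp) actT_tr34; last exact: conjC_wf.
by rewrite /conjC /= pushD_map_swap_tag.
Qed.

Lemma act_s4t4 x : coset_wf x ->
  act [:: (true, idx3); (false, idx3); (true, idx3); (false, idx3)] x = x.
Proof.
move=> hx; rewrite /act /= /act_letter /= -/tr34 -!/(act_t4 _).
have tr34S : tr34 \in S5 by [].
rewrite actA_tr34_act_t4 ?actA_wf ?act_t4_wf // actA_comp ?act_t4_wf //.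
rewrite tr34_invol actA_id ?act_t4_wf //.
case/andP: hx => hp _; rewrite /act_t4 /= actT_comp // tr34_invol actT_id //.
by case: x {hp}.
Qed.

Lemma act_monochrome b r x : all (fun l : letter => l.1 == b) r -> perm_of (indices r) = id5 ->
  coset_wf x -> act r x = x.
Proof.
case: b => hb e hx.
  by rewrite act_s_word ?e ?actA_id //; apply: sub_all hb => l /eqP.
have hp : pnf_wf x.1 by case/andP: hx.
rewrite act_t_word ?e ?actT_id //; first by case: x {hx hp}.
by apply: sub_all hb => l /eqP->.
Qed.

Lemma act_relator r x : relator r -> coset_wf x -> act r x = x.
Proof.
case=> [[b i]|b i j hij|b i j hij|]; last exact: act_s4t4.
all: apply: (act_monochrome (b := b)); rewrite /= ?eqxx //.
- by case: i => [[|[|[|[]]]] ?].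
- by case: i hij => [[|[|[|[]]]] ?]; case: j => [[|[|[|[]]]] ?].
- by case: i hij => [[|[|[|[]]]] ?]; case: j => [[|[|[|[]]]] ?].
Qed.

Lemma act_weq u v x : weq u v -> coset_wf x -> act u x = act v x.
Proof.
move=> e; elim: e x => {u v} [w|u v _ IH|u v w _ IH1 _ IH2|u r v hr] x hx //.
- by rewrite IH.
- by rewrite IH1 // IH2.
- by rewrite !act_cat (act_relator hr (act_wf v hx)).
Qed.

Definition s4 : letter := (true, idx3).

Definition sword := perm_word true.

Definition tword := perm_word false.

Definition syl_word (u : syl) : word := if u.1 then s4 :: tword u.2 ++ [:: s4] else tword u.2.

Definition syls_word (ss : seq syl) : word := flatten (map syl_word ss).

Definition pnf_word (p : pnf) : word := syls_word p.1 ++ tword p.2.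

Definition tail_word (tl : seq (perm5 * pnf)) : word :=
  flatten [seq sword t.1 ++ pnf_word t.2 | t <- tl].

Definition coset_word (x : coset) : word := pnf_word x.1 ++ tail_word x.2.

Arguments syls_word : simpl never.
Arguments pnf_word : simpl never.
Arguments tail_word : simpl never.

Lemma tail_word_cons t r : tail_word (t :: r) = sword t.1 ++ pnf_word t.2 ++ tail_word r.
Proof. by rewrite /tail_word /= -catA. Qed.

Lemma perm_word_splitC b z : z \in S5 ->
  weq (perm_word b z) (perm_word b (splitC z).1 ++ perm_word b (splitC z).2).
Proof.
by move=> zS; have [/transversal_S5 yS /in_C_S5 cS e] := splitC_spec zS; rewrite perm_word_mul // e.
Qed.

Lemma perm_word_tr34 b : perm_word b tr34 = [:: (b, idx3)].
Proof. exact: (perm_word_transp b idx3). Qed.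

Lemma tword_s4 c : in_C c -> weq (tword c ++ [:: s4]) (s4 :: tword c).
Proof.
case/in_C_cases=> ->; rewrite /tword ?perm_word_id ?perm_word_tr34 //.
exact: weq_commute rel_s4t4.
Qed.

Lemma s4_syls_word ss : weq (s4 :: syls_word ss) (syls_word (map swap_tag ss) ++ [:: s4]).
Proof.
elim: ss => [|u r IH] //.
have step : weq (s4 :: syl_word u) (syl_word (swap_tag u) ++ [:: s4]).
  rewrite /syl_word /swap_tag; case: u.1 => /=; first by rewrite weq_cancel.
  by rewrite -catA weq_cancel_r.
rewrite /syls_word /= -/(syls_word _) -/(syls_word _).
by rewrite -cat_cons step -catA /= IH catA.
Qed.

Lemma tword_syl_word e u : in_C e -> u.2 \in S5 ->
  let z := splitC (mulp e u.2) in weq (tword e ++ syl_word u) (syl_word (u.1, z.1) ++ tword z.2).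
Proof.
move=> he uS /=; have zS := mulp_S5 (in_C_S5 he) uS; have [_ he' _] := splitC_spec zS.
have E : weq (tword e ++ tword u.2)
    (tword (splitC (mulp e u.2)).1 ++ tword (splitC (mulp e u.2)).2).
  by rewrite /tword (perm_word_mul _ (in_C_S5 he) uS); exact: perm_word_splitC.
rewrite /syl_word /=; case: u.1; last exact: E.
rewrite -cat1s catA (tword_s4 he) /= catA E -!catA /=.
by apply/cons_weq/weq_catl/tword_s4.
Qed.

Lemma pushD_word e ss d : in_C e -> all (fun u => nontrivial_rep u.2) ss -> in_C d ->
  weq (tword e ++ syls_word ss ++ tword d) (pnf_word (pushD e ss d)).
Proof.
elim: ss e => [|u r IH] e he; first by move=> _ hd; rewrite /tword perm_word_mul ?in_C_S5.
case/andP=> hu hr hd; have := tword_syl_word he (transversal_S5 (nontrivial_transversal hu)).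
rewrite /= => step; rewrite /syls_word /= -/(syls_word r) -catA catA step -catA.
have [_ he' _] := splitC_spec (mulp_S5 (in_C_S5 he) (transversal_S5 (nontrivial_transversal hu))).
by rewrite (IH _ he' hr hd) /pnf_word /syls_word /= catA.
Qed.

Lemma syls_word_lead ss : syls_word ss = tword (lead_T ss) ++ syls_word (behead_T ss).
Proof. by case: ss => [|[[] y] r] //=; rewrite /tword perm_word_id. Qed.

Lemma actT_word b p : b \in S5 -> pnf_wf p -> weq (tword b ++ pnf_word p) (pnf_word (actT b p)).
Proof.
case: p => ss d bS /andP[/= hss hd]; rewrite /actT /pnf_word /= syls_word_lead.
have [htl _] := reduced_behead_T hss; have lS := transversal_S5 (lead_T_transversal hss).
have zS := mulp_S5 bS lS; have [hy he _] := splitC_spec zS.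
rewrite -!catA catA /tword (perm_word_mul _ bS lS) (perm_word_splitC _ zS) -catA -/tword.
have hr : all (fun u => nontrivial_rep u.2) (behead_T ss) by case/andP: htl.
rewrite (pushD_word he hr hd).
rewrite /consT; case: eqP => [->|_]; first by rewrite /tword perm_word_id.
by rewrite /pnf_word /syls_word /= -catA.
Qed.

Lemma conjC_word c p : in_C c -> in_C p.2 ->
  weq (sword c ++ pnf_word p) (pnf_word (conjC c p) ++ sword c).
Proof.
case/in_C_cases=> ->; first by rewrite /sword perm_word_id conjC_id cats0.
case: p => ss d /= hd; rewrite /sword perm_word_tr34 /conjC /pnf_word /=.
rewrite -cat_cons s4_syls_word -!catA /=.
by apply/weq_catl/weq_sym/tword_s4.
Qed.

Lemma pushC_word c tl : in_C c -> tail_wf tl ->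
  exists2 c', in_C c' & weq (sword c ++ tail_word tl) (tail_word (pushC c tl) ++ sword c').
Proof.
elim: tl c => [|t r IH] c hc; first by exists c; rewrite // /tail_word /= cats0.
case/andP=> /andP[/andP[ht /andP[_ hp2]] _] hr.
have tS := transversal_S5 (nontrivial_transversal ht); have zS := mulp_S5 (in_C_S5 hc) tS.
have [_ he _] := splitC_spec zS; have [c' hc' E] := IH _ he hr.
exists c' => //; rewrite pushC_cons !tail_word_cons /=.
rewrite catA /sword (perm_word_mul _ (in_C_S5 hc) tS) (perm_word_splitC _ zS) -/sword.
rewrite -(catA (sword _) (sword _)) (catA (sword _) (pnf_word _)) (conjC_word he hp2).
by rewrite -(catA (pnf_word _)) E -!catA.
Qed.

Lemma pnf_word1 : pnf_word pnf1 = [::].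
Proof. by rewrite /pnf_word /tword perm_word_id. Qed.

Lemma s_word_sword q : s_word (sword q).
Proof. by rewrite /sword perm_wordE /s_word all_map; apply/allP. Qed.

Lemma coset_word_nonbase x : x != base_coset ->
  coset_word x = sword (headA x) ++ pnf_word (headP x) ++ tail_word (restA x).
Proof.
case: x => p tl; rewrite /coset_word /headA /headP /restA /=.
case: (p =P pnf1) => [-> |_ _] /=; last by rewrite /sword perm_word_id.
by case: tl => [|t r]; rewrite ?eqxx // tail_word_cons pnf_word1.
Qed.

Lemma actA_word a x : a \in S5 -> coset_wf x ->
  exists2 u, s_word u & weq (sword a ++ coset_word x) (coset_word (actA a x) ++ u).
Proof.
move=> aS hx; case: (x =P base_coset) => [-> |/eqP hb].
  exists (sword a); first exact: s_word_sword.
  by rewrite /actA eqxx /coset_word /= pnf_word1 /tail_word /= cats0.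
have [h1 h2 h3 h4] := headA_spec hx hb; have hS := transversal_S5 h1.
have zS := mulp_S5 aS hS; have [hy hc _] := splitC_spec zS.
have [c' hc' E] := pushC_word hc h4.
exists (sword c'); first exact: s_word_sword.
have hP2 : in_C (headP x).2 by case/andP: h2.
rewrite (coset_word_nonbase hb) (actA_nonbase _ hb).
rewrite catA /sword (perm_word_mul _ aS hS) (perm_word_splitC _ zS) -/sword.
rewrite -(catA (sword _) (sword _)) (catA (sword _) (pnf_word _)) (conjC_word hc hP2).
rewrite -(catA (pnf_word _)) E /consA; case: eqP => [->|_].
  by rewrite /sword perm_word_id /coset_word -!catA.
by rewrite /coset_word /= pnf_word1 tail_word_cons -!catA.
Qed.

Lemma coset_word_base : coset_word base_coset = [::].
Proof. by rewrite /coset_word pnf_word1. Qed.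

Lemma base_coset_wf : coset_wf base_coset.
Proof. by []. Qed.

Lemma act_coset_word g : exists2 u, s_word u & weq g (coset_word (act g base_coset) ++ u).
Proof.
elim: g => [|[[] i] g [u hu E]]; first by exists [::]; rewrite ?coset_word_base.
- have hy := act_wf g base_coset_wf.
  have [u' hu' E'] := actA_word (transp_S5 (ltn_ord i)) hy.
  exists (u' ++ u); first by rewrite /s_word all_cat; apply/andP.
  apply: weq_trans (cons_weq _ E) _.
  by rewrite -cat1s catA -(perm_word_transp true i) E' -catA.
- exists u => //; apply: weq_trans (cons_weq _ E) _.
  rewrite -cat1s catA -(perm_word_transp false i) /coset_word catA.
  by rewrite actT_word ?transp_S5 //; case/andP: (act_wf g base_coset_wf).
Qed.

Lemma actA_fixed a x : a \in S5 -> a != id5 -> ~~ odd_perm5 a -> coset_wf x -> actA a x = x ->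
  x = base_coset.
Proof.
move=> aS a1 aeven hx; case: (x =P base_coset) => // /eqP hb.
have [h1 h2 h3 h4] := headA_spec hx hb.
have [hy hc _] := splitC_spec (mulp_S5 aS (transversal_S5 h1)).
case: (consA_spec hy hc h2 h3 h4) => _ _ E _ _; rewrite actA_nonbase // => ex.
by move: (transversal_not_fixed aS a1 aeven h1); rewrite -{2}ex E eqxx.
Qed.

Unset Implicit Arguments.

Theorem lemma4p24 (a : word) :
  in_A5s a -> involution a ->
  forall g : word, in_centralizer a g -> in_S5s g.
Proof.
move=> [w [sw [even_w aw]]] [_ a_nontriv] g centr.
set p := perm_of (indices w); have pS : p \in S5 by exact/perm_of_S5/valid_indices.
have p1 : p != id5.
  apply: contra_notN a_nontriv => /eqP p1; rewrite aw (s_word_mkword sw).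
  by apply: (@coxeter_faithful true _ [::]); rewrite ?valid_indices.
have p_even : ~~ odd_perm5 p by rewrite odd_perm_of ?valid_indices // size_map.
have act_a y : coset_wf y -> act a y = actA p y by move=> hy; rewrite (act_weq aw hy) act_s_word.
have := act_weq centr base_coset_wf.
rewrite !act_cat act_a // act_a ?act_wf // {1}/actA eqxx => /esym /actA_fixed fixed.
have [u su] := act_coset_word g; rewrite fixed ?act_wf // coset_word_base => gu.
by exists u.
Qed.
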